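(* In the standing setup, let $g=B^{\rm T}f$ with $f=f_0$ be associated to $f$ via $B=\alpha I+\beta A+\gamma A^2$, $B^2=I$. Then for every vector $v\in\mathbb C^6$, $$g''v=f''(B^{\rm T}v),\qquad f''v=g''(B^{\rm T}v),$$ equivalently $B^{\rm T}(f''v)=f''(B^{\rm T}v)$ and $B^{\rm T}(g''v)=g''(B^{\rm T}v)$.
   Context: Standing setup: $J=\begin{pmatrix}0&I_3\\-I_3&0\end{pmatrix}$ ($6\times6$). $A$ is a fixed real $6\times 6$ skew-Hamiltonian matrix ($A^{\rm T}J=JA$). $H_0$ is a homogeneous cubic polynomial on $\mathbb R^6$ with $A\nabla^2H_0(x)=\nabla^2H_0(x)A^{\rm T}$ for all $x$, $H_1,H_2$ homogeneous cubic polynomials with $\nabla H_1=A\nabla H_0$, $\nabla H_2=A\nabla H_1$, $f_i=J\nabla H_i$. For a quadratic vector field $h$, the second derivative $h''$ is a constant tensor, and for a vector $v$, $h''v$ denotes the $6\times6$ matrix with entries $(h''v)_{ij}=\sum_\ell \frac{\partial^2h_i}{\partial x_j\partial x_\ell}v_\ell$. Associated field: if $B=\alpha I+\beta A+\gamma A^2$ with $B^2=I$, then $g=B^{\rm T}f_0$. *)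

From HB Require Import structures.
From mathcomp Require Import all_boot all_order all_algebra.
Set Implicit Arguments. Unset Strict Implicit. Unset Printing Implicit Defensive.
Import Order.TTheory GRing.Theory Num.Theory.
Local Open Scope ring_scope.

(* Scalars live in a numeric algebraically closed field C (the complex
   numbers are the intended instance); "real" objects are those whose
   entries satisfy [\is Num.real]. *)

(* The symplectic matrix J = [[0, I_3], [-I_3, 0]]. *)
Definition Jmx {C : numClosedFieldType} : 'M[C]_6 :=
  \matrix_(i < 6, j < 6)
    if (i < 3)%N && (val j == (val i + 3)%N) then 1
    else if (3 <= i)%N && ((val j + 3)%N == val i) then -1 else 0.

(* A homogeneous cubic polynomial on C^6, given by its coefficients:
   H(x) = sum_{i,j,k} T i j k x_i x_j x_k. *)
Definition cubic (C : numClosedFieldType) := 'I_6 -> 'I_6 -> 'I_6 -> C.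

Definition real_cubic {C : numClosedFieldType} (T : cubic C) : Prop :=
  forall i j k, T i j k \is Num.real.

Definition cubic_eval {C : numClosedFieldType} (T : cubic C) (x : 'cV[C]_6) : C :=
  \sum_(i < 6) \sum_(j < 6) \sum_(k < 6) T i j k * x i 0 * x j 0 * x k 0.

(* A quadratic vector field on C^6: h_i(x) = sum_{j,k} Q i j k x_j x_k. *)
Definition quadfield (C : numClosedFieldType) := 'I_6 -> 'I_6 -> 'I_6 -> C.

Definition quad_eval {C : numClosedFieldType} (Q : quadfield C) (x : 'cV[C]_6)
  : 'cV[C]_6 :=
  \col_(i < 6) \sum_(j < 6) \sum_(k < 6) Q i j k * x j 0 * x k 0.

Definition gradQ {C : numClosedFieldType} (T : cubic C) : quadfield C :=
  fun m j k => T m j k + T j m k + T j k m.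

Definition grad {C : numClosedFieldType} (T : cubic C) (x : 'cV[C]_6) : 'cV[C]_6 :=
  quad_eval (gradQ T) x.

Definition hess {C : numClosedFieldType} (T : cubic C) (x : 'cV[C]_6) : 'M[C]_6 :=
  \matrix_(m < 6, n < 6) \sum_(k < 6)
     (T m n k + T m k n + T n m k + T k m n + T n k m + T k n m) * x k 0.

Definition mulQ {C : numClosedFieldType} (M : 'M[C]_6) (Q : quadfield C)
  : quadfield C :=
  fun i j k => \sum_(l < 6) M i l * Q l j k.

(* h'' v : (h''v)_{ij} = sum_l d^2 h_i / dx_j dx_l * v_l. *)
Definition d2 {C : numClosedFieldType} (Q : quadfield C) (v : 'cV[C]_6) : 'M[C]_6 :=
  \matrix_(i < 6, j < 6) \sum_(l < 6) (Q i j l + Q i l j) * v l 0.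

From HB Require Import structures.
From mathcomp Require Import all_boot all_order all_algebra.
From mathcomp Require Import ring.
Import Order.TTheory GRing.Theory Num.Theory.
Local Open Scope ring_scope.

(** The Hessian of a cubic is linear in the point and its coefficient tensor
   [hess_coef] is totally symmetric.  Testing the commutation
   [A H''(x) = H''(x) A^T] at the basis vectors therefore makes the tensor
   [A H''] symmetric as well, which says exactly [H''(A^T v) = A H''(v)] for
   every (even complex) [v]; the same then holds for any polynomial [B] in [A].
   Since [f'' v = J H0''(v)], [B^T J = J B] and [g'' = B^T f''], all four
   identities follow, two of them through [B^T B^T = 1]. *)

Section PolyIntertwining.
Context {R : comNzRingType} {n : nat} (a b c : R).

Lemma quadpoly_intertwine {A A' M : 'M[R]_n} :
  A *m M = M *m A' ->
  (a%:M + b *: A + c *: (A *m A)) *m M = M *m (a%:M + b *: A' + c *: (A' *m A')).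
Proof.
move=> AM; rewrite !mulmxDl !mulmxDr -!scalemxAl -!scalemxAr.
by rewrite mul_scalar_mx mul_mx_scalar -!mulmxA AM !mulmxA AM.
Qed.

Lemma trmx_quadpoly (A : 'M[R]_n) :
  (a%:M + b *: A + c *: (A *m A))^T = a%:M + b *: A^T + c *: (A^T *m A^T).
Proof. by rewrite !linearD !linearZ /= tr_scalar_mx trmx_mul. Qed.

End PolyIntertwining.

Section Hessian.
Variables (C : numClosedFieldType) (T : cubic C).

Definition hess_coef (m n k : 'I_6) : C :=
  T m n k + T m k n + T n m k + T k m n + T n k m + T k n m.

Lemma hess_coefC12 m n k : hess_coef m n k = hess_coef n m k.
Proof. rewrite /hess_coef; ring. Qed.

Lemma hess_coefC23 m n k : hess_coef m n k = hess_coef m k n.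
Proof. rewrite /hess_coef; ring. Qed.

Lemma hessE x m n : hess T x m n = \sum_(k < 6) hess_coef m n k * x k 0.
Proof. by rewrite mxE. Qed.

Lemma hessD x y : hess T (x + y) = hess T x + hess T y.
Proof.
apply/matrixP => m n; rewrite !mxE -big_split; apply: eq_bigr => k _.
by rewrite !mxE mulrDr.
Qed.

Lemma hessZ s x : hess T (s *: x) = s *: hess T x.
Proof.
apply/matrixP => m n; rewrite !mxE big_distrr; apply: eq_bigr => k _.
by rewrite !mxE mulrCA.
Qed.

Lemma hess_delta k m n : hess T (delta_mx k 0) m n = hess_coef m n k.
Proof.
rewrite hessE (bigD1 k) //= big1 ?addr0; first by rewrite mxE !eqxx mulr1.
by move=> l /negbTE lk; rewrite mxE lk /= mulr0.
Qed.

Lemma delta_realmx (k : 'I_6) : (delta_mx k 0 : 'cV[C]_6) \is a realmx.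
Proof. by apply/mxOverP => i j; rewrite mxE; case: (_ && _); rewrite ?real0 ?real1. Qed.

Variable A : 'M[C]_6.
Hypothesis hess_commute :
  forall x : 'cV[C]_6, x \is a realmx -> A *m hess T x = hess T x *m A^T.

Lemma mul_hess_coef_sym i j k :
  \sum_l A i l * hess_coef l j k = \sum_l A j l * hess_coef l i k.
Proof.
move/matrixP: (hess_commute _ (delta_realmx k)) => /(_ i j); rewrite !mxE.
under eq_bigr do rewrite hess_delta.
under [RHS]eq_bigr do rewrite hess_delta mxE.
by move=> ->; apply: eq_bigr => l _; rewrite mulrC hess_coefC12.
Qed.

Lemma hess_trmx_mul v : hess T (A^T *m v) = A *m hess T v.
Proof.
apply/matrixP => m n; rewrite hessE mxE.
under eq_bigr do rewrite mxE big_distrr /=.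
under [RHS]eq_bigr do rewrite hessE big_distrr /=.
rewrite exchange_big [RHS]exchange_big /=; apply: eq_bigr => l _.
transitivity ((\sum_k A l k * hess_coef k m n) * v l 0).
  rewrite big_distrl; apply: eq_bigr => k _; rewrite mxE.
  by rewrite hess_coefC12 hess_coefC23 hess_coefC12 hess_coefC23 mulrCA mulrA.
transitivity ((\sum_k A m k * hess_coef k n l) * v l 0); last first.
  by rewrite big_distrl; apply: eq_bigr => k _; rewrite mulrA.
rewrite mul_hess_coef_sym; congr (_ * _).
by apply: eq_bigr => k _; rewrite hess_coefC23.
Qed.

Lemma hess_quadpoly_trmx_mul (a b c : C) v :
  hess T ((a%:M + b *: A + c *: (A *m A))^T *m v)
  = (a%:M + b *: A + c *: (A *m A)) *m hess T v.
Proof.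
rewrite trmx_quadpoly !mulmxDl !hessD -!scalemxAl !hessZ -(mulmxA A^T).
by rewrite !hess_trmx_mul !mul_scalar_mx hessZ mulmxA.
Qed.

End Hessian.

Lemma d2_mulQ (C : numClosedFieldType) (M : 'M[C]_6) (Q : quadfield C) v :
  d2 (mulQ M Q) v = M *m d2 Q v.
Proof.
apply/matrixP => i j; rewrite !mxE.
under [RHS]eq_bigr do rewrite mxE big_distrr /=.
rewrite [RHS]exchange_big /=; apply: eq_bigr => l _.
rewrite /mulQ -big_split big_distrl /=.
by apply: eq_bigr => p _; rewrite -mulrDr -mulrA.
Qed.

Lemma d2_gradQ (C : numClosedFieldType) (T : cubic C) v :
  d2 (gradQ T) v = hess T v.
Proof.
apply/matrixP => i j; rewrite !mxE; apply: eq_bigr => k _.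
by congr (_ * _); rewrite /gradQ; ring.
Qed.

Theorem mainTheorem9 (C : numClosedFieldType)
  (A : 'M[C]_6) (H0 H1 H2 : cubic C) (alpha beta gamma : C) :
  A \is a realmx ->
  A^T *m Jmx = Jmx *m A ->
  real_cubic H0 -> real_cubic H1 -> real_cubic H2 ->
  (forall x : 'cV[C]_6, x \is a realmx -> A *m hess H0 x = hess H0 x *m A^T) ->
  (forall x : 'cV[C]_6, x \is a realmx -> grad H1 x = A *m grad H0 x) ->
  (forall x : 'cV[C]_6, x \is a realmx -> grad H2 x = A *m grad H1 x) ->
  alpha \is Num.real -> beta \is Num.real -> gamma \is Num.real ->
  let B := alpha%:M + beta *: A + gamma *: (A *m A) in
  B *m B = 1%:M ->
  let f := mulQ Jmx (gradQ H0) in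
  let g := mulQ B^T f in
  forall v : 'cV[C]_6,
    [/\ d2 g v = d2 f (B^T *m v),
        d2 f v = d2 g (B^T *m v),
        B^T *m d2 f v = d2 f (B^T *m v)
      & B^T *m d2 g v = d2 g (B^T *m v)].
Proof.
move=> _ AJ _ _ _ hess_commute _ _ _ _ _ B BB f g v.
have d2f w : d2 f w = Jmx *m hess H0 w by rewrite d2_mulQ d2_gradQ.
have d2g w : d2 g w = B^T *m d2 f w by rewrite d2_mulQ.
have BTBT : B^T *m B^T = 1%:M by rewrite -trmx_mul BB tr_scalar_mx.
have BJ : B^T *m Jmx = Jmx *m B.
  by rewrite trmx_quadpoly (quadpoly_intertwine alpha beta gamma AJ).
have d2f_BT : B^T *m d2 f v = d2 f (B^T *m v).
  by rewrite !d2f hess_quadpoly_trmx_mul // !mulmxA BJ.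
by rewrite !d2g -d2f_BT mulmxA BTBT mul1mx.
Qed.
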